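(* Let $\beta$ be irrational with continued fraction denominators $(q'_n)_{n\ge1}$. Let $f:\mathbb{T}\to\mathbb{R}$ be real analytic and not a trigonometric polynomial, with Fourier coefficients $a_k$, and let $(l_k)_{k\ge1}$ be a strictly increasing sequence of positive integers with $a_{l_k}\neq0$ and $|a_{l_k}|/T_{l_k}\to\infty$, where $T_n=\sum_{j\ge2}|a_{jn}|\,|jn|$. For $k\ge1$ let $\eta(k)$ be the smallest integer with $q'_{\eta(k)}>2k^2/|a_{l_k}|^2$. For $n,m\ge1$ let $V_{n,m}=\{\alpha\in\mathbb{R}\setminus\mathbb{Q}: q_n(\alpha)=l_m \text{ and } q_{n+1}(\alpha)>2q'_{\eta(m)}n^2\}$, $\mathcal{U}_j=\bigcup_{n\ge1}V_{n,j}$, and $\mathcal{U}=\bigcap_{M\ge1}\bigcup_{j\ge M}\mathcal{U}_j$. Then $\mathcal{U}$ is a dense $G_\delta$ subset of $\mathbb{R}$.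
   Context: For an irrational $\gamma=[c_0;c_1,c_2,\dots]$, its continued fraction denominators are $q_0=1$, $q_1=c_1$, $q_n=c_nq_{n-1}+q_{n-2}$; $q_n(\gamma)$ denotes the $n$-th one. $\mathbb{T}=\mathbb{R}/\mathbb{Z}$. *)

From Stdlib Require Import Reals Lra ZArith.
From Coquelicot Require Import Coquelicot.
Open Scope R_scope.

Definition irrational (x : R) : Prop :=
  ~ exists (p q : Z), q <> 0%Z /\ x = IZR p / IZR q.

Fixpoint cf_x (x : R) (n : nat) : R :=
  match n with
  | O => x
  | S m => / (cf_x x m - IZR (Int_part (cf_x x m)))
  end.

Definition cf_c (x : R) (n : nat) : Z := Int_part (cf_x x n).

(* pair (q_n, q_{n+1}) with q_0 = 1, q_1 = c_1, q_n = c_n q_{n-1} + q_{n-2} *)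
Fixpoint cf_qpair (x : R) (n : nat) : Z * Z :=
  match n with
  | O => (1%Z, cf_c x 1)
  | S m => let (a, b) := cf_qpair x m in (b, (cf_c x (S (S m)) * b + a)%Z)
  end.

Definition cf_q (x : R) (n : nat) : Z := fst (cf_qpair x n).

(* f : T -> R seen as a 1-periodic function on R *)
Definition periodic1 (f : R -> R) : Prop := forall x, f (x + 1) = f x.

Definition real_analytic (f : R -> R) : Prop :=
  forall x0, exists r : R, 0 < r /\ exists c : nat -> R,
    forall x, Rabs (x - x0) < r -> is_pseries c (x - x0) (f x).

Definition trig_poly (f : R -> R) : Prop :=
  exists (N : nat) (c d : nat -> R), forall x,
    f x = sum_f_R0 (fun k => c k * cos (2 * PI * INR k * x)
                            + d k * sin (2 * PI * INR k * x)) N.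

(* Fourier coefficient a_k = \int_0^1 f(x) e^{-2 pi i k x} dx *)
Definition fourier (f : R -> R) (k : Z) : C :=
  (RInt (fun x => f x * cos (2 * PI * IZR k * x)) 0 1,
   - RInt (fun x => f x * sin (2 * PI * IZR k * x)) 0 1).

Definition Tsum (f : R -> R) (n : nat) : R :=
  Series (fun j => Cmod (fourier f (Z.of_nat ((j + 2) * n)))
                   * INR ((j + 2) * n)).

Definition G_delta (U : R -> Prop) : Prop :=
  exists O : nat -> (R -> Prop), (forall i, open_set (O i)) /\
    forall x, U x <-> forall i, O i x.

Definition dense (U : R -> Prop) : Prop :=
  forall x eps, 0 < eps -> exists y, U y /\ Rabs (y - x) < eps.

(* Near an irrational alpha the first partial quotients of alpha, hence q_n and q_(n+1), are
   locally constant, so each union of the U_j over j >= M is open relative to the irrationals.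
   It is also dense: an elementary sieve gives, for every large denominator l_j, a reduced
   fraction p / l_j in any prescribed interval; its continued fraction ends with denominator
   l_j, and appending one huge irrational complete quotient keeps the point in the interval
   while making q_(n+1) as large as wanted.  Removing the countably many rationals and applying
   Baire's theorem on R gives a dense G_delta. *)

From Stdlib Require Import Reals ZArith.
From Coquelicot Require Import Coquelicot.
From Stdlib Require Import Lra Lia Psatz Znumtheory Classical IndefiniteDescription Factorial Wf_nat.
From Stdlib Require Cantor.
Open Scope R_scope.

(** * Rational and irrational numbers *)

Definition rational (x : R) : Prop :=
  exists p q, q <> 0%Z /\ x = IZR p / IZR q.

Lemma rational_IZR m : rational (IZR m).
Proof. exists m, 1%Z; split; [lia | simpl; field]. Qed.

Lemma rational_inv x : rational x -> rational (/ x).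
Proof.
  intros [p [q [Hq ->]]].
  destruct (Z.eq_dec p 0) as [-> | Hp].
  - unfold Rdiv; rewrite Rmult_0_l, Rinv_0; apply (rational_IZR 0).
  - exists q, p; split; [exact Hp |].
    apply not_0_IZR in Hq, Hp; field; auto.
Qed.

Lemma rational_sub_IZR x m : rational x -> rational (x - IZR m).
Proof.
  intros [p [q [Hq ->]]]; exists (p - m * q)%Z, q; split; [exact Hq |].
  rewrite minus_IZR, mult_IZR; apply not_0_IZR in Hq; field; auto.
Qed.

Lemma rational_add_IZR x m : rational x -> rational (x + IZR m).
Proof.
  intros H; replace (x + IZR m) with (x - IZR (- m)) by (rewrite opp_IZR; ring).
  now apply rational_sub_IZR.
Qed.

Lemma irrational_neq_IZR x : irrational x -> forall m, x <> IZR m.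
Proof. intros Hx m ->; exact (Hx (rational_IZR m)). Qed.

Lemma rational_cf_x x k : rational x -> rational (cf_x x k).
Proof.
  intros Hx; induction k as [| k IH]; [exact Hx |].
  now apply rational_inv, rational_sub_IZR.
Qed.

Lemma rational_of_cf_x_S x k : rational (cf_x x (S k)) -> rational (cf_x x k).
Proof.
  simpl; intros H.
  destruct (Req_dec (cf_x x k - IZR (Int_part (cf_x x k))) 0) as [E | _].
  - replace (cf_x x k) with (IZR (Int_part (cf_x x k))) by lra; apply rational_IZR.
  - apply rational_inv in H; rewrite Rinv_inv in H.
    replace (cf_x x k) with (cf_x x k - IZR (Int_part (cf_x x k)) + IZR (Int_part (cf_x x k)))
      by ring.
    now apply rational_add_IZR.
Qed.

Lemma irrational_cf_x x k : irrational x -> irrational (cf_x x k).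
Proof.
  intros Hx; induction k as [| k IH]; [exact Hx |].
  intros H; exact (IH (rational_of_cf_x_S x k H)).
Qed.

Lemma even_of_even_square p : Z.even (p * p) = true -> exists k, p = (2 * k)%Z.
Proof.
  rewrite Z.even_mul; intros H; apply Z.even_spec.
  now destruct (Z.even p).
Qed.

Lemma square_neq_twice_square N : forall p q,
  (Z.abs q <= Z.of_nat N)%Z -> q <> 0%Z -> (p * p <> 2 * q * q)%Z.
Proof.
  induction N as [| N IH]; intros p q Hq Hq0 E; [lia |].
  destruct (even_of_even_square p) as [p' ->].
  { rewrite E, <- Z.mul_assoc; apply Z.even_mul. }
  destruct (even_of_even_square q) as [q' ->].
  { replace (q * q)%Z with (2 * (p' * p'))%Z by lia; apply Z.even_mul. }
  apply (IH p' q'); lia.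
Qed.

Lemma irrational_sqrt2 : irrational (sqrt 2).
Proof.
  intros [p [q [Hq E]]].
  assert (Hq' : IZR q <> 0) by (apply not_0_IZR; exact Hq).
  assert (Hsq : IZR (p * p) = IZR (2 * q * q)).
  { rewrite !mult_IZR.
    assert (H2 : sqrt 2 * sqrt 2 = 2) by (apply sqrt_sqrt; lra).
    rewrite E in H2; field_simplify in H2; auto.
    apply (f_equal (fun x => x * IZR q ^ 2)) in H2; field_simplify in H2; auto; lra. }
  apply eq_IZR in Hsq.
  exact (square_neq_twice_square (Z.abs_nat q) p q ltac:(lia) Hq Hsq).
Qed.

Lemma exists_irrational_gt T : exists z, T < z /\ irrational z.
Proof.
  destruct (archimed T) as [HT _].
  exists (IZR (up T) + sqrt 2); split.
  - pose proof (sqrt_lt_R0 2 ltac:(lra)); lra.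
  - intros H; apply irrational_sqrt2.
    replace (sqrt 2) with (IZR (up T) + sqrt 2 - IZR (up T)) by ring.
    now apply rational_sub_IZR.
Qed.

(** * Local constancy of the expansion at irrational points *)

Definition locally_constant {A : Type} (g : R -> A) (x : R) : Prop :=
  exists del, 0 < del /\ forall y, Rabs (y - x) < del -> g y = g x.

Lemma locally_constant_pair {A B : Type} (g : R -> A) (h : R -> B) x :
  locally_constant g x -> locally_constant h x ->
  locally_constant (fun y => (g y, h y)) x.
Proof.
  intros [d1 [Hd1 Hg]] [d2 [Hd2 Hh]].
  exists (Rmin d1 d2); split; [now apply Rmin_glb_lt |].
  intros y Hy; pose proof (Rmin_l d1 d2); pose proof (Rmin_r d1 d2).
  rewrite Hg, Hh by lra; reflexivity.
Qed.

Lemma locally_constant_map {A B : Type} (F : A -> B) (g : R -> A) x :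
  locally_constant g x -> locally_constant (fun y => F (g y)) x.
Proof. intros [d [Hd Hg]]; exists d; split; [exact Hd |]; intros y Hy; now rewrite Hg. Qed.

Lemma Int_part_locally_constant t0 : (forall m, t0 <> IZR m) ->
  locally_constant Int_part t0.
Proof.
  intros Hn; destruct (base_Int_part t0) as [H1 H2].
  assert (Hbelow : IZR (Int_part t0) < t0)
    by (destruct H1 as [Hlt | Heq]; [exact Hlt | now destruct (Hn _ (eq_sym Heq))]).
  exists (Rmin (t0 - IZR (Int_part t0)) (IZR (Int_part t0) + 1 - t0)); split.
  - apply Rmin_glb_lt; lra.
  - intros t Ht; apply Rabs_def2 in Ht.
    pose proof (Rmin_l (t0 - IZR (Int_part t0)) (IZR (Int_part t0) + 1 - t0)).
    pose proof (Rmin_r (t0 - IZR (Int_part t0)) (IZR (Int_part t0) + 1 - t0)).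
    symmetry; apply Int_part_spec; lra.
Qed.

(* Near an irrational point the floors taken by the algorithm do not jump, so each complete
   quotient is a composition of continuous maps there. *)
Lemma continuity_pt_cf_x x k : irrational x -> continuity_pt (fun y => cf_x y k) x.
Proof.
  intros Hx; induction k as [| k IH]; [apply continuity_pt_id |].
  pose proof (irrational_cf_x x k Hx) as Hk.
  destruct (Int_part_locally_constant _ (irrational_neq_IZR _ Hk)) as [e [He Hfloor]].
  destruct (IH e He) as [d [Hd Hcont]].
  apply continuity_pt_locally_ext with
    (f := fun y => / (cf_x y k - IZR (Int_part (cf_x x k)))) (a := d); [exact Hd | |].
  - intros y Hy; simpl; rewrite (Hfloor (cf_x y k)); [reflexivity |].
    destruct (Req_dec y x) as [-> | Hne]; [rewrite Rminus_diag, Rabs_R0; exact He |].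
    apply (Hcont y); split; [split; [exact I | auto] | exact Hy].
  - apply (continuity_pt_inv (fun y => cf_x y k - IZR (Int_part (cf_x x k)))).
    + apply (continuity_pt_minus (fun y => cf_x y k) (fct_cte _)); [exact IH |].
      apply continuity_pt_const; intros a b; reflexivity.
    + pose proof (irrational_neq_IZR _ Hk (Int_part (cf_x x k))); lra.
Qed.

Lemma cf_c_locally_constant x k : irrational x -> locally_constant (fun y => cf_c y k) x.
Proof.
  intros Hx; pose proof (irrational_cf_x x k Hx) as Hk.
  destruct (Int_part_locally_constant _ (irrational_neq_IZR _ Hk)) as [e [He Hfloor]].
  destruct (continuity_pt_cf_x x k Hx e He) as [d [Hd Hcont]].
  exists d; split; [exact Hd |]; intros y Hy; unfold cf_c.
  destruct (Req_dec y x) as [-> | Hne]; [reflexivity |].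
  apply Hfloor, (Hcont y); split; [split; [exact I | auto] | exact Hy].
Qed.

Lemma cf_qpair_locally_constant x n : irrational x -> locally_constant (fun y => cf_qpair y n) x.
Proof.
  intros Hx; induction n as [| n IH].
  - exact (locally_constant_map (fun c => (1%Z, c)) _ x (cf_c_locally_constant x 1 Hx)).
  - exact (locally_constant_map
             (fun pc => let '((a, b), c) := pc in (b, (c * b + a)%Z)) _ x
             (locally_constant_pair _ _ x IH (cf_c_locally_constant x (S (S n)) Hx))).
Qed.

Lemma cf_q_S x n : cf_q x (S n) = snd (cf_qpair x n).
Proof. unfold cf_q; simpl; now destruct (cf_qpair x n). Qed.

(** * Finite continued fractions and continuants *)

(* [cf_eval d k t] is the finite continued fraction [d_0; d_1, ..., d_(k-1), t]. *)
Fixpoint cf_eval (d : nat -> Z) (k : nat) (t : R) : R :=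
  match k with
  | O => t
  | S k => cf_eval d k (IZR (d k) + / t)
  end.

Lemma cf_eval_cf_x x k : cf_eval (cf_c x) k (cf_x x k) = x.
Proof.
  induction k as [| k IH]; [reflexivity |]; simpl.
  rewrite Rinv_inv; unfold cf_c.
  replace (IZR (Int_part (cf_x x k)) + (cf_x x k - IZR (Int_part (cf_x x k)))) with (cf_x x k)
    by ring.
  exact IH.
Qed.

Lemma cf_x_cf_eval d k : (forall i, (1 <= i < k)%nat -> (1 <= d i)%Z) ->
  forall t, (k = O \/ 1 < t) ->
  cf_x (cf_eval d k t) k = t /\ forall i, (i < k)%nat -> cf_c (cf_eval d k t) i = d i.
Proof.
  induction k as [| k IH]; intros Hd t Ht; [split; [reflexivity | lia] |].
  assert (Ht1 : 1 < t) by (destruct Ht as [Hk | Ht]; [lia | exact Ht]).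
  assert (Hinv : 0 < / t < 1).
  { split; [apply Rinv_0_lt_compat; lra |]; rewrite <- Rinv_1; apply Rinv_lt_contravar; lra. }
  set (s := IZR (d k) + / t).
  assert (Hs : k = O \/ 1 < s).
  { destruct k as [| k]; [now left | right].
    assert (1 <= d (S k))%Z as H by (apply Hd; lia); apply IZR_le in H; unfold s; lra. }
  destruct (IH (fun i Hi => Hd i ltac:(lia)) s Hs) as [Hx Hc].
  assert (Hfloor : Int_part s = d k) by (symmetry; apply Int_part_spec; unfold s; lra).
  simpl cf_eval; fold s; split.
  - simpl; rewrite Hx, Hfloor; unfold s.
    replace (IZR (d k) + / t - IZR (d k)) with (/ t) by ring; apply Rinv_inv.
  - intros i Hi; destruct (Nat.eq_dec i k) as [-> | Hne].
    + unfold cf_c; now rewrite Hx.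
    + apply Hc; lia.
Qed.

Lemma continuity_pt_cf_eval d k : (forall i, (1 <= i < k)%nat -> (1 <= d i)%Z) ->
  forall t, (k = O \/ 0 < t) -> continuity_pt (cf_eval d k) t.
Proof.
  induction k as [| k IH]; intros Hd t Ht; [apply continuity_pt_id |].
  assert (Ht0 : 0 < t) by (destruct Ht as [Hk | Ht]; [lia | exact Ht]).
  assert (Hinv : 0 < / t) by (apply Rinv_0_lt_compat; lra).
  change (continuity_pt (comp (cf_eval d k) (fun t => IZR (d k) + / t)) t).
  apply continuity_pt_comp.
  - apply (continuity_pt_plus (fct_cte _) (fun t => / t)).
    + apply continuity_pt_const; intros a b; reflexivity.
    + apply (continuity_pt_inv id); [apply continuity_pt_id | unfold id; lra].
  - apply IH; [intros i Hi; apply Hd; lia |].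
    destruct k as [| k]; [now left | right].
    assert (1 <= d (S k))%Z as H by (apply Hd; lia); apply IZR_le in H; lra.
Qed.

(* [continuant d u n] runs x_(m+1) = d_(m+1) x_m + x_(m-1) from (x_(-1), x_0) = u and returns
   (x_(n-1), x_n); so [num_pair d n] = (p_(n-1), p_n) and [den_pair d n] = (q_(n-1), q_n). *)
Fixpoint continuant (d : nat -> Z) (u : Z * Z) (n : nat) : Z * Z :=
  match n with
  | O => u
  | S m => let (a, b) := continuant d u m in (b, (d (S m) * b + a)%Z)
  end.

Definition num_pair (d : nat -> Z) : nat -> Z * Z := continuant d (1%Z, d O).
Definition den_pair (d : nat -> Z) : nat -> Z * Z := continuant d (0%Z, 1%Z).

Lemma fst_continuant_S d u n : fst (continuant d u (S n)) = snd (continuant d u n).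
Proof. simpl; now destruct (continuant d u n). Qed.

Lemma snd_continuant_S d u n :
  snd (continuant d u (S n)) = (d (S n) * snd (continuant d u n) + fst (continuant d u n))%Z.
Proof. simpl; now destruct (continuant d u n). Qed.

Lemma continuant_ext d e u n : (forall i, (1 <= i <= n)%nat -> d i = e i) ->
  continuant d u n = continuant e u n.
Proof.
  induction n as [| n IH]; intros H; [reflexivity |]; simpl.
  rewrite IH by (intros i Hi; apply H; lia).
  destruct (continuant e u n); rewrite H by lia; reflexivity.
Qed.

Lemma cf_qpair_den_pair x n : cf_qpair x n = den_pair (cf_c x) (S n).
Proof.
  induction n as [| n IH]; [unfold den_pair; simpl; f_equal; ring |].
  change (cf_qpair x (S n)) with
    (let (a, b) := cf_qpair x n in (b, (cf_c x (S (S n)) * b + a)%Z)).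
  rewrite IH; reflexivity.
Qed.

Lemma cf_q_den_pair x n : cf_q x n = snd (den_pair (cf_c x) n).
Proof. unfold cf_q; rewrite cf_qpair_den_pair; apply fst_continuant_S. Qed.

Lemma den_pair_pos d n : (forall i, (1 <= i <= n)%nat -> (1 <= d i)%Z) ->
  (0 <= fst (den_pair d n) /\ 1 <= snd (den_pair d n))%Z.
Proof.
  induction n as [| n IH]; intros H; [simpl; lia |].
  unfold den_pair in *; rewrite fst_continuant_S, snd_continuant_S.
  assert (1 <= d (S n))%Z by (apply H; lia).
  destruct (IH (fun i Hi => H i ltac:(lia))); nia.
Qed.

Lemma cf_c_le_cf_q_S x n : (forall i, (1 <= i <= n)%nat -> (1 <= cf_c x i)%Z) ->
  (0 <= cf_c x (S n))%Z -> (cf_c x (S n) <= cf_q x (S n))%Z.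
Proof.
  intros Hd Hc; rewrite cf_q_den_pair; unfold den_pair; rewrite snd_continuant_S.
  destruct (den_pair_pos (cf_c x) n Hd) as [Hfst Hsnd]; unfold den_pair in *; nia.
Qed.

Lemma continuant_det d u v n :
  Z.abs (snd (continuant d u n) * fst (continuant d v n)
         - fst (continuant d u n) * snd (continuant d v n))
  = Z.abs (snd u * fst v - fst u * snd v).
Proof.
  induction n as [| n IH]; [reflexivity |]; simpl.
  destruct (continuant d u n) as [a b], (continuant d v n) as [c e]; simpl in *.
  rewrite <- IH, <- Z.abs_opp; f_equal; ring.
Qed.

Lemma rel_prime_num_den d n : rel_prime (snd (num_pair d n)) (snd (den_pair d n)).
Proof.
  pose proof (continuant_det d (1%Z, d O) (0%Z, 1%Z) n) as Hdet.
  unfold num_pair, den_pair in *.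
  destruct (continuant d (1%Z, d O) n) as [a b], (continuant d (0%Z, 1%Z) n) as [c e].
  simpl in *; apply bezout_rel_prime.
  destruct (Z.abs_spec (b * c - a * e)) as [[_ E] | [_ E]]; rewrite E in Hdet.
  - apply (Bezout_intro _ _ _ c (- a)); lia.
  - apply (Bezout_intro _ _ _ (- c) a); lia.
Qed.

Lemma cf_eval_mobius d n : (forall i, (1 <= i <= n)%nat -> (1 <= d i)%Z) ->
  forall t, 0 < t ->
  cf_eval d (S n) t = (IZR (snd (num_pair d n)) * t + IZR (fst (num_pair d n))) /
                      (IZR (snd (den_pair d n)) * t + IZR (fst (den_pair d n))).
Proof.
  induction n as [| n IH]; intros Hd t Ht; [simpl; field; lra |].
  change (cf_eval d (S (S n)) t) with (cf_eval d (S n) (IZR (d (S n)) + / t)).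
  assert (Hdn : 1 <= IZR (d (S n))) by (apply IZR_le, Hd; lia).
  assert (Hinv : 0 < / t) by (apply Rinv_0_lt_compat; lra).
  destruct (den_pair_pos d n (fun i Hi => Hd i ltac:(lia))) as [Hc He].
  rewrite IH by first [intros i Hi; apply Hd; lia | lra].
  unfold num_pair, den_pair in *; rewrite !fst_continuant_S, !snd_continuant_S.
  destruct (continuant d (1%Z, d O) n) as [a b], (continuant d (0%Z, 1%Z) n) as [c e].
  simpl in *; apply IZR_le in Hc, He; rewrite !plus_IZR, !mult_IZR.
  assert (0 < IZR e * (IZR (d (S n)) + / t)) by (apply Rmult_lt_0_compat; lra).
  assert (0 <= (IZR (d (S n)) * IZR e + IZR c) * t) by (apply Rmult_le_pos; nra).
  field; split; lra.
Qed.

Lemma cf_eval_last d n : (1 <= n)%nat -> (forall i, (1 <= i <= n)%nat -> (1 <= d i)%Z) ->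
  cf_eval d n (IZR (d n)) = IZR (snd (num_pair d n)) / IZR (snd (den_pair d n)).
Proof.
  intros Hn Hd; destruct n as [| m]; [lia |].
  assert (Hdm : 1 <= IZR (d (S m))) by (apply IZR_le, Hd; lia).
  rewrite cf_eval_mobius by first [intros i Hi; apply Hd; lia | lra].
  unfold num_pair, den_pair; rewrite !snd_continuant_S, !plus_IZR, !mult_IZR; f_equal; ring.
Qed.

(** * Continued fraction of a reduced fraction *)

Lemma cf_x_S_shift x k : cf_x x (S k) = cf_x (cf_x x 1) k.
Proof. induction k as [| k IH]; [reflexivity |]; simpl in *; now rewrite IH. Qed.

Lemma Int_part_IZR m : Int_part (IZR m) = m.
Proof. symmetry; apply Int_part_spec; lra. Qed.

Lemma inv_frac_part_gt_1 t : (forall m, t <> IZR m) -> 1 < / (t - IZR (Int_part t)).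
Proof.
  intros Hn; destruct (base_Int_part t) as [H1 H2].
  pose proof (Hn (Int_part t)).
  rewrite <- Rinv_1; apply Rinv_lt_contravar; [apply Rmult_lt_0_compat |]; lra.
Qed.

(* Euclid's algorithm: the denominators of the successive complete quotients decrease. *)
Lemma cf_x_eventually_integer N : forall p q, (0 < q)%Z -> (Z.to_nat q <= N)%nat ->
  exists n m, cf_x (IZR p / IZR q) n = IZR m.
Proof.
  induction N as [| N IH]; intros p q Hq HN; [lia |].
  pose proof (Z_div_mod_eq_full p q) as Ediv.
  pose proof (Z.mod_pos_bound p q Hq) as Hmod.
  assert (Hq' : IZR q <> 0) by (apply not_0_IZR; lia).
  assert (Er : IZR p / IZR q = IZR (p / q) + IZR (p mod q) / IZR q).
  { rewrite Ediv at 1; rewrite plus_IZR, mult_IZR; field; exact Hq'. }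
  destruct (Z.eq_dec (p mod q) 0) as [E0 | Hs].
  - exists O, (p / q)%Z; simpl; rewrite Er, E0; unfold Rdiv; ring.
  - assert (Hfrac : 0 < IZR (p mod q) / IZR q < 1).
    { assert (0 < IZR (p mod q) < IZR q) by (split; apply IZR_lt; lia).
      split; [apply Rdiv_lt_0_compat; lra |].
      apply Rlt_div_l; lra. }
    assert (Hfloor : Int_part (IZR p / IZR q) = (p / q)%Z) by (symmetry; apply Int_part_spec; lra).
    assert (E1 : cf_x (IZR p / IZR q) 1 = IZR q / IZR (p mod q)).
    { simpl; rewrite Hfloor, Er.
      replace (IZR (p / q) + IZR (p mod q) / IZR q - IZR (p / q)) with (IZR (p mod q) / IZR q)
        by ring.
      assert (IZR (p mod q) <> 0) by (apply not_0_IZR; exact Hs).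
      field; split; assumption. }
    destruct (IH q (p mod q) ltac:(lia) ltac:(lia)) as [n Hn].
    exists (S n); now rewrite cf_x_S_shift, E1.
Qed.

Lemma reduced_fraction_den_unique p q P Q : rel_prime p q -> rel_prime P Q ->
  (0 < q)%Z -> (0 < Q)%Z -> IZR p / IZR q = IZR P / IZR Q -> Q = q.
Proof.
  intros Hpq HPQ Hq HQ E.
  assert (Ez : (p * Q = P * q)%Z).
  { apply eq_IZR; rewrite !mult_IZR.
    assert (IZR q <> 0) by (apply not_0_IZR; lia).
    assert (IZR Q <> 0) by (apply not_0_IZR; lia).
    apply (f_equal (fun z => z * IZR q * IZR Q)) in E; field_simplify in E; auto; lra. }
  apply Z.divide_antisym_nonneg; try lia.
  - apply Gauss with P; [exists p; lia | now apply rel_prime_sym].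
  - apply Gauss with p; [exists P; lia | now apply rel_prime_sym].
Qed.

Lemma reduced_fraction_cf p q : (2 <= q)%Z -> rel_prime p q ->
  exists n d, (1 <= n)%nat /\ (forall i, (1 <= i <= n)%nat -> (1 <= d i)%Z) /\
    IZR p / IZR q = cf_eval d n (IZR (d n)) /\ snd (den_pair d n) = q.
Proof.
  intros Hq Hpq; set (r := IZR p / IZR q).
  set (integral := fun n => exists m, cf_x r n = IZR m).
  destruct (dec_inh_nat_subset_has_unique_least_element integral
              (fun n => classic (integral n))
              (cf_x_eventually_integer (Z.to_nat q) p q ltac:(lia) ltac:(lia)))
    as [n [[[m Hm] Hleast] _]].
  set (d := cf_c r).
  assert (Hn : (1 <= n)%nat).
  { destruct n as [| n]; [exfalso | lia].
    assert (Ep : p = (m * q)%Z).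
    { apply eq_IZR; rewrite mult_IZR, <- Hm; unfold r; simpl; field; apply not_0_IZR; lia. }
    destruct Hpq as [_ _ Hg].
    assert (Hq1 : (q | 1)%Z) by (apply Hg; [exists m; exact Ep | apply Z.divide_refl]).
    apply Z.divide_pos_le in Hq1; lia. }
  assert (Hd : forall i, (1 <= i <= n)%nat -> (1 <= d i)%Z).
  { intros [| i] Hi; [lia |].
    assert (Hgt : 1 < cf_x r (S i)).
    { apply inv_frac_part_gt_1; intros k Hk.
      assert (n <= i)%nat by (apply Hleast; now exists k); lia. }
    destruct (base_Int_part (cf_x r (S i))) as [_ Hfloor].
    assert (Hpos : 0 < IZR (d (S i))) by (unfold d, cf_c; lra).
    apply lt_IZR in Hpos; lia. }
  assert (Hdn : cf_x r n = IZR (d n)) by (unfold d, cf_c; now rewrite Hm, Int_part_IZR).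
  exists n, d; repeat split; [exact Hn | exact Hd | |].
  - fold r; rewrite <- Hdn; symmetry; apply cf_eval_cf_x.
  - apply (reduced_fraction_den_unique p q (snd (num_pair d n))); try lia.
    + exact Hpq.
    + apply rel_prime_num_den.
    + pose proof (den_pair_pos d n Hd); lia.
    + fold r; rewrite <- cf_eval_last by assumption; rewrite <- Hdn; symmetry; apply cf_eval_cf_x.
Qed.

(** * Coprime numerators in an interval *)

Lemma exists_prime_divisor n : (1 < n)%Z -> exists l, prime l /\ (l | n)%Z.
Proof.
  intros Hn.
  apply (Z_lt_induction (fun n => 1 < n -> exists l, prime l /\ (l | n))%Z); [| lia | exact Hn].
  intros k IH Hk; destruct (prime_dec k) as [Hp | Hp].
  - exists k; split; [exact Hp | apply Z.divide_refl].
  - destruct (not_prime_divide k Hk Hp) as [m [Hm Hmk]].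
    destruct (IH m ltac:(lia) ltac:(lia)) as [l [Hl Hlm]].
    exists l; split; [exact Hl | eapply Z.divide_trans; eassumption].
Qed.

Lemma rel_prime_of_no_common_prime p q : q <> 0%Z ->
  (forall l, prime l -> (l | p)%Z -> (l | q)%Z -> False) -> rel_prime p q.
Proof.
  intros Hq H; apply Zgcd_1_rel_prime.
  assert (Hg : Z.gcd p q <> 0%Z) by (intros E; apply Z.gcd_eq_0 in E; lia).
  pose proof (Z.gcd_nonneg p q).
  destruct (Z.eq_dec (Z.gcd p q) 1) as [E | E]; [exact E | exfalso].
  destruct (exists_prime_divisor (Z.gcd p q) ltac:(lia)) as [l [Hl Hlg]].
  apply (H l Hl); eapply Z.divide_trans; try exact Hlg.
  - apply Z.gcd_divide_l.
  - apply Z.gcd_divide_r.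
Qed.

Lemma prime_not_divide_one_mod l m p : prime l -> (l | m)%Z -> (m | p - 1)%Z -> ~ (l | p)%Z.
Proof.
  intros Hl Hlm Hmp Hlp.
  assert (Hl1 : (l | 1)%Z).
  { replace 1%Z with (p - (p - 1))%Z by ring.
    apply Z.divide_sub_r; [exact Hlp | exact (Z.divide_trans _ _ _ Hlm Hmp)]. }
  apply prime_ge_2 in Hl; apply Z.divide_pos_le in Hl1; lia.
Qed.

Lemma exists_one_mod_in_interval m A : (1 <= m)%Z ->
  exists p, (m | p - 1)%Z /\ A < IZR p <= A + IZR m.
Proof.
  intros Hm; set (k := Int_part A).
  destruct (base_Int_part A) as [H1 H2]; fold k in H1, H2.
  pose proof (Z_div_mod_eq_full (- k) m) as Ediv.
  pose proof (Z.mod_pos_bound (- k) m ltac:(lia)) as Hmod.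
  exists (k + 1 + (- k) mod m)%Z; split.
  - exists (- ((- k) / m))%Z; lia.
  - assert (0 <= IZR ((- k) mod m) <= IZR m - 1).
    { rewrite <- minus_IZR; split; apply IZR_le; lia. }
    rewrite !plus_IZR; lra.
Qed.

Lemma Zdivide_fact B k : (1 <= k <= B)%nat -> (Z.of_nat k | Z.of_nat (fact B))%Z.
Proof.
  induction B as [| B IH]; intros Hk; [lia |].
  change (fact (S B)) with (S B * fact B)%nat; rewrite Nat2Z.inj_mul.
  destruct (Nat.eq_dec k (S B)) as [-> | Hne].
  - apply Z.divide_mul_l, Z.divide_refl.
  - apply Z.divide_mul_r, IH; lia.
Qed.

(* Among two consecutive numbers = 1 mod m at most one is divisible by l, and l is the only
   prime that can be shared with q = l m. *)
Lemma coprime_near_prime_cofactor l m q A : prime l -> q = (m * l)%Z -> (1 <= m)%Z ->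
  exists p, rel_prime p q /\ A < IZR p <= A + 2 * IZR m.
Proof.
  intros Hl Eq Hm.
  assert (Hcommon : forall p, (m | p - 1)%Z -> forall l', prime l' -> (l' | p)%Z ->
                      (l' | q)%Z -> (l | p)%Z).
  { intros p Hp l' Hl' Hl'p Hl'q; rewrite Eq in Hl'q.
    destruct (prime_mult l' Hl' _ _ Hl'q) as [Hl'm | Hl'l].
    - now destruct (prime_not_divide_one_mod l' m p Hl' Hl'm Hp).
    - apply prime_div_prime in Hl'l; [now subst | exact Hl' | exact Hl]. }
  assert (Hq : q <> 0%Z) by (pose proof (prime_ge_2 l Hl); nia).
  destruct (exists_one_mod_in_interval m A Hm) as [p [Hp Hpin]].
  destruct (classic (l | p)%Z) as [Hlp | Hlp].
  - assert (Hp' : (m | p + m - 1)%Z).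
    { replace (p + m - 1)%Z with (p - 1 + m * 1)%Z by ring.
      apply Z.divide_add_r; [exact Hp | apply Z.divide_mul_l, Z.divide_refl]. }
    exists (p + m)%Z; split; [| rewrite plus_IZR; lra].
    apply rel_prime_of_no_common_prime; [exact Hq |].
    intros l' Hl' H1 H2; pose proof (Hcommon _ Hp' l' Hl' H1 H2) as Hlpm.
    apply (prime_not_divide_one_mod l m p Hl); [| exact Hp | exact Hlp].
    replace m with (p + m - p)%Z by ring; now apply Z.divide_sub_r.
  - exists p; split; [| assert (1 <= IZR m) by (apply IZR_le; lia); lra].
    apply rel_prime_of_no_common_prime; [exact Hq |].
    intros l' Hl' H1 H2; exact (Hlp (Hcommon _ Hp l' Hl' H1 H2)).
Qed.

Lemma coprime_near_smooth B q A : q <> 0%Z ->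
  (forall l, prime l -> (l | q)%Z -> (l < Z.of_nat B)%Z) ->
  exists p, rel_prime p q /\ A < IZR p <= A + INR (fact B).
Proof.
  intros Hq Hsmooth.
  destruct (exists_one_mod_in_interval (Z.of_nat (fact B)) A) as [p [Hp Hpin]].
  { pose proof (lt_O_fact B); lia. }
  exists p; split; [| rewrite INR_IZR_INZ; exact Hpin].
  apply rel_prime_of_no_common_prime; [exact Hq |].
  intros l Hl Hlp Hlq; pose proof (prime_ge_2 l Hl); pose proof (Hsmooth l Hl Hlq).
  apply (prime_not_divide_one_mod l (Z.of_nat (fact B)) p Hl); [| exact Hp | exact Hlp].
  replace l with (Z.of_nat (Z.to_nat l)) by lia; apply Zdivide_fact; lia.
Qed.

Lemma archimedean_mul_gt c L : 0 < L -> exists N : nat, forall x, INR N <= x -> c < x * L.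
Proof.
  intros HL; destruct (archimed (c / L)) as [Hup _].
  exists (Z.to_nat (up (c / L))); intros x Hx.
  assert (IZR (up (c / L)) <= INR (Z.to_nat (up (c / L)))).
  { rewrite INR_IZR_INZ; apply IZR_le; lia. }
  apply (Rmult_lt_reg_r (/ L)); [now apply Rinv_0_lt_compat |].
  rewrite Rmult_assoc, Rinv_r, Rmult_1_r by lra; unfold Rdiv in Hup; lra.
Qed.

Lemma coprime_numerator_in_interval a b : a < b ->
  exists Q0 : nat, forall q, (Z.of_nat Q0 <= q)%Z ->
    exists p, rel_prime p q /\ IZR q * a < IZR p < IZR q * b.
Proof.
  intros Hab.
  destruct (archimedean_mul_gt 2 (b - a) ltac:(lra)) as [B HB].
  specialize (HB (INR B) (Rle_refl _)).
  destruct (archimedean_mul_gt (INR (fact B)) (b - a) ltac:(lra)) as [Q0 HQ0].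
  exists Q0; intros q Hq.
  assert (HqL : INR (fact B) < IZR q * (b - a)).
  { apply HQ0; rewrite INR_IZR_INZ; now apply IZR_le. }
  pose proof (lt_0_INR _ (lt_O_fact B)).
  assert (Hq0 : (0 < q)%Z) by (apply lt_IZR; nra).
  destruct (classic (exists l, prime l /\ (Z.of_nat B <= l)%Z /\ (l | q)%Z))
    as [[l [Hl [HlB [m Hm]]]] | Hsmooth].
  - assert (Hm1 : (1 <= m)%Z) by (pose proof (prime_ge_2 l Hl); nia).
    destruct (coprime_near_prime_cofactor l m q (IZR q * a) Hl Hm Hm1) as [p [Hpq Hpin]].
    exists p; split; [exact Hpq |].
    assert (2 * IZR m < IZR q * (b - a)); [| lra].
    apply IZR_le in HlB, Hm1; rewrite <- INR_IZR_INZ in HlB.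
    assert (2 < IZR l * (b - a)) by (apply Rmult_le_compat_r with (r := b - a) in HlB; lra).
    rewrite Hm, mult_IZR, Rmult_assoc; nra.
  - destruct (coprime_near_smooth B q (IZR q * a) ltac:(lia)) as [p [Hpq Hpin]].
    + intros l Hl Hlq; apply Z.nle_gt; intros HlB; apply Hsmooth; now exists l.
    + exists p; split; [exact Hpq | lra].
Qed.

(** * The sets U_j and Baire's theorem *)

(* Appending a huge irrational complete quotient z to the expansion of p/q moves the point
   little, keeps q as the n-th denominator and makes the next one at least floor z. *)
Lemma exists_irrational_near_reduced_fraction p q eps (T : nat -> R) :
  (2 <= q)%Z -> rel_prime p q -> 0 < eps ->
  exists y n, Rabs (y - IZR p / IZR q) < eps /\ irrational y /\ (1 <= n)%nat /\
    cf_q y n = q /\ T n < IZR (cf_q y (S n)).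
Proof.
  intros Hq Hpq Heps.
  destruct (reduced_fraction_cf p q Hq Hpq) as [n [d [Hn [Hd [Er Hden]]]]].
  assert (Hdn : 1 <= IZR (d n)) by (apply IZR_le, Hd; lia).
  destruct (continuity_pt_cf_eval d n (fun i Hi => Hd i ltac:(lia)) (IZR (d n))
              ltac:(right; lra) eps Heps) as [del [Hdel Hcont]].
  destruct (exists_irrational_gt (Rmax (T n + 1) (Rmax (/ del) 1))) as [z [Hz Hzirr]].
  pose proof (Rmax_l (T n + 1) (Rmax (/ del) 1)); pose proof (Rmax_r (T n + 1) (Rmax (/ del) 1)).
  pose proof (Rmax_l (/ del) 1); pose proof (Rmax_r (/ del) 1).
  assert (Hinvz : 0 < / z < del).
  { assert (0 < / del) by (apply Rinv_0_lt_compat; exact Hdel).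
    split; [apply Rinv_0_lt_compat; lra |].
    rewrite <- (Rinv_inv del); apply Rinv_lt_contravar; [apply Rmult_lt_0_compat |]; lra. }
  set (y := cf_eval d (S n) z).
  destruct (cf_x_cf_eval d (S n) (fun i Hi => Hd i ltac:(lia)) z ltac:(right; lra))
    as [Hzq Hdigits]; fold y in Hzq, Hdigits.
  assert (Hden_y : den_pair (cf_c y) n = den_pair d n).
  { apply continuant_ext; intros i Hi; apply Hdigits; lia. }
  exists y, n; repeat split; [| | exact Hn | |].
  - rewrite Er; unfold y; simpl cf_eval.
    apply (Hcont (IZR (d n) + / z)); split; [split; [exact I | lra] |].
    simpl; unfold R_dist, Rdist.
    replace (IZR (d n) + / z - IZR (d n)) with (/ z) by ring; rewrite Rabs_right; lra.
  - intros Hy; apply Hzirr; rewrite <- Hzq; now apply rational_cf_x.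
  - now rewrite cf_q_den_pair, Hden_y.
  - assert (Hc : cf_c y (S n) = Int_part z) by (unfold cf_c; now rewrite Hzq).
    destruct (base_Int_part z) as [_ Hfloor].
    assert (Hge : (cf_c y (S n) <= cf_q y (S n))%Z).
    { apply cf_c_le_cf_q_S; [intros i Hi; rewrite Hdigits by lia; apply Hd, Hi |].
      rewrite Hc; apply le_IZR; lra. }
    apply IZR_le in Hge; rewrite Hc in Hge; lra.
Qed.

Definition Ulevel (l : nat -> nat) (T : nat -> nat -> R) (j : nat) (alpha : R) : Prop :=
  exists n, (1 <= n)%nat /\
    (irrational alpha /\ cf_q alpha n = Z.of_nat (l j) /\ IZR (cf_q alpha (S n)) > T j n).

Definition Ulimsup (l : nat -> nat) (T : nat -> nat -> R) (alpha : R) : Prop :=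
  forall M, (1 <= M)%nat -> exists j, (M <= j)%nat /\ Ulevel l T j alpha.

Lemma Ulevel_dense l T : (forall M N, exists j, (M <= j)%nat /\ (N <= l j)%nat) ->
  forall M a b, a < b -> exists y j, a < y < b /\ (M <= j)%nat /\ Ulevel l T j y.
Proof.
  intros Hl M a b Hab.
  destruct (coprime_numerator_in_interval a b Hab) as [Q0 HQ0].
  destruct (Hl M (Nat.max Q0 2)) as [j [Hj Hlj]].
  destruct (HQ0 (Z.of_nat (l j)) ltac:(lia)) as [p [Hpq Hpin]].
  assert (Hq : 0 < IZR (Z.of_nat (l j))) by (apply IZR_lt; lia).
  assert (Hr : a < IZR p / IZR (Z.of_nat (l j)) < b).
  { split; [apply Rlt_div_r | apply Rlt_div_l]; lra. }
  destruct (exists_irrational_near_reduced_fraction p (Z.of_nat (l j))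
              (Rmin (IZR p / IZR (Z.of_nat (l j)) - a) (b - IZR p / IZR (Z.of_nat (l j))))
              (T j) ltac:(lia) Hpq ltac:(apply Rmin_glb_lt; lra))
    as [y [n [Hy [Hirr [Hn [Hqn Hqn1]]]]]].
  exists y, j; split; [| split; [exact Hj | now exists n]].
  apply Rabs_def2 in Hy.
  pose proof (Rmin_l (IZR p / IZR (Z.of_nat (l j)) - a) (b - IZR p / IZR (Z.of_nat (l j)))).
  pose proof (Rmin_r (IZR p / IZR (Z.of_nat (l j)) - a) (b - IZR p / IZR (Z.of_nat (l j)))).
  lra.
Qed.

Lemma Ulevel_locally_open l T j x : Ulevel l T j x ->
  exists del, 0 < del /\ forall y, Rabs (y - x) < del -> irrational y -> Ulevel l T j y.
Proof.
  intros [n [Hn [Hx [Hqn Hqn1]]]].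
  destruct (cf_qpair_locally_constant x n Hx) as [del [Hdel Hconst]].
  exists del; split; [exact Hdel |]; intros y Hy Hyirr.
  exists n; split; [exact Hn |]; split; [exact Hyirr |].
  rewrite cf_q_S in *; unfold cf_q in *; rewrite (Hconst y Hy); now split.
Qed.

Definition Utail_interior (l : nat -> nat) (T : nat -> nat -> R) (M : nat) (x : R) : Prop :=
  exists del, 0 < del /\ forall y, Rabs (y - x) < del -> irrational y ->
    exists j, (M <= j)%nat /\ Ulevel l T j y.

Lemma open_Utail_interior l T M : open_set (Utail_interior l T M).
Proof.
  intros x [del [Hdel H]]; exists (mkposreal del Hdel); intros z Hz; unfold disc in Hz; simpl in Hz.
  exists (del - Rabs (z - x)); split; [lra |]; intros y Hy Hyirr; apply H; [| exact Hyirr].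
  pose proof (Rabs_triang (y - z) (z - x)).
  replace (y - x) with ((y - z) + (z - x)) by ring; lra.
Qed.

Lemma Utail_interior_of_Ulevel l T M j x : (M <= j)%nat -> Ulevel l T j x ->
  Utail_interior l T M x.
Proof.
  intros Hj HU; destruct (Ulevel_locally_open l T j x HU) as [del [Hdel H]].
  exists del; split; [exact Hdel |]; intros y Hy Hyirr; exists j; auto.
Qed.

Lemma open_neq r : open_set (fun x => x <> r).
Proof.
  intros x Hx; assert (Hpos : 0 < Rabs (x - r)) by (apply Rabs_pos_lt; lra).
  exists (mkposreal _ Hpos); intros z Hz; unfold disc in Hz; simpl in Hz.
  intros ->; rewrite Rabs_minus_sym in Hz; lra.
Qed.

Lemma open_dense_subinterval (O : R -> Prop) : open_set O ->
  (forall a b, a < b -> exists z, a < z < b /\ O z) ->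
  forall a b, a < b ->
    exists a' b', a < a' < b' /\ b' < b /\ forall w, a' <= w <= b' -> O w.
Proof.
  intros Hopen Hdense a b Hab.
  destruct (Hdense a b Hab) as [z [Hz Oz]]; destruct (Hopen z Oz) as [del Hdel].
  pose proof (cond_pos del).
  set (rho := Rmin del (Rmin (z - a) (b - z)) / 2).
  pose proof (Rmin_l del (Rmin (z - a) (b - z))); pose proof (Rmin_r del (Rmin (z - a) (b - z))).
  pose proof (Rmin_l (z - a) (b - z)); pose proof (Rmin_r (z - a) (b - z)).
  assert (0 < Rmin del (Rmin (z - a) (b - z))) by (repeat apply Rmin_glb_lt; lra).
  exists (z - rho), (z + rho); unfold rho; repeat split; try lra.
  intros w Hw; apply Hdel; unfold disc; apply Rabs_def1; lra.
Qed.

Lemma nested_intervals_common_point (u v : nat -> R) :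
  Un_growing u -> Un_decreasing v -> (forall n, u n <= v n) ->
  exists m, forall n, u n <= m <= v n.
Proof.
  intros Hu Hv Huv.
  assert (Hcross : forall i j, u i <= v j).
  { intros i j; destruct (Nat.le_ge_cases i j) as [Hij | Hji].
    - pose proof (growing_prop u j i Hu Hij); pose proof (Huv j); lra.
    - pose proof (decreasing_prop v j i Hv Hji); pose proof (Huv i); lra. }
  destruct (completeness (fun w => exists i, w = u i)) as [m [Hub Hlub]].
  - exists (v O); intros w [i ->]; apply Hcross.
  - exists (u O), O; reflexivity.
  - exists m; intros n; split.
    + apply Hub; now exists n.
    + apply Hlub; intros w [i ->]; apply Hcross.
Qed.

Lemma baire_R (G : nat -> R -> Prop) : (forall i, open_set (G i)) ->
  (forall i a b, a < b -> exists z, a < z < b /\ G i z) ->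
  forall a b, a < b -> exists y, a < y < b /\ forall i, G i y.
Proof.
  intros Gopen Gdense a b Hab.
  assert (Hstep : forall ip : nat * (R * R), exists J : R * R,
            fst (snd ip) < snd (snd ip) ->
            fst (snd ip) < fst J < snd J /\ snd J < snd (snd ip) /\
            forall w, fst J <= w <= snd J -> G (fst ip) w).
  { intros [i [u v]]; simpl; destruct (Rlt_dec u v) as [Huv | Huv].
    - destruct (open_dense_subinterval _ (Gopen i) (Gdense i) u v Huv) as [u' [v' H]].
      now exists (u', v').
    - exists (u, v); intros; contradiction. }
  destruct (functional_choice _ Hstep) as [F HF].
  set (I := fix I n := match n with O => (a, b) | S n => F (n, I n) end).
  assert (Hlt : forall n, fst (I n) < snd (I n)).
  { induction n as [| n IH]; [exact Hab |]; apply (HF (n, I n) IH). }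
  assert (Hnext : forall n, fst (I n) < fst (I (S n)) /\ snd (I (S n)) < snd (I n) /\
                            forall w, fst (I (S n)) <= w <= snd (I (S n)) -> G n w).
  { intros n; destruct (HF (n, I n) (Hlt n)) as [H1 [H2 H3]]; cbn [fst snd] in H1, H2, H3.
    change (I (S n)) with (F (n, I n)); split; [lra | split; [exact H2 | exact H3]]. }
  destruct (nested_intervals_common_point (fun n => fst (I n)) (fun n => snd (I n)))
    as [m Hm].
  - intros n; destruct (Hnext n); lra.
  - intros n; destruct (Hnext n) as [_ [Hn _]]; lra.
  - intros n; pose proof (Hlt n); lra.
  - exists m; split.
    + destruct (Hnext O) as [H1 [H2 _]]; pose proof (Hm 1%nat); simpl in *; lra.
    + intros i; apply (Hnext i), Hm.
Qed.

(* Pairs of pairs of naturals code all fractions (a1 - a2) / (b1 - b2). *)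
Definition rat_enum (k : nat) : R :=
  let (u, v) := Cantor.of_nat k in
  let (a1, a2) := Cantor.of_nat u in
  let (b1, b2) := Cantor.of_nat v in
  IZR (Z.of_nat a1 - Z.of_nat a2) / IZR (Z.of_nat b1 - Z.of_nat b2).

Lemma rational_rat_enum k : rational (rat_enum k).
Proof.
  unfold rat_enum; destruct (Cantor.of_nat k) as [u v].
  destruct (Cantor.of_nat u) as [a1 a2], (Cantor.of_nat v) as [b1 b2].
  destruct (Z.eq_dec (Z.of_nat b1 - Z.of_nat b2) 0) as [E | E].
  - rewrite E; unfold Rdiv; rewrite Rinv_0, Rmult_0_r; apply (rational_IZR 0).
  - now exists (Z.of_nat a1 - Z.of_nat a2)%Z, (Z.of_nat b1 - Z.of_nat b2)%Z.
Qed.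

Lemma rat_enum_surjective p q : exists k, rat_enum k = IZR p / IZR q.
Proof.
  exists (Cantor.to_nat (Cantor.to_nat (Z.to_nat p, Z.to_nat (- p)),
                         Cantor.to_nat (Z.to_nat q, Z.to_nat (- q)))).
  unfold rat_enum; rewrite !Cantor.cancel_of_to; do 2 f_equal; lia.
Qed.

Definition Ucover (l : nat -> nat) (T : nat -> nat -> R) (i : nat) (x : R) : Prop :=
  Utail_interior l T (S (fst (Cantor.of_nat i))) x /\ x <> rat_enum (snd (Cantor.of_nat i)).

Lemma open_Ucover l T i : open_set (Ucover l T i).
Proof.
  apply (open_set_P3 (Utail_interior _ _ _)); [apply open_Utail_interior | apply open_neq].
Qed.

Lemma Ucover_dense l T : (forall M N, exists j, (M <= j)%nat /\ (N <= l j)%nat) ->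
  forall i a b, a < b -> exists z, a < z < b /\ Ucover l T i z.
Proof.
  intros Hl i a b Hab; set (r := rat_enum (snd (Cantor.of_nat i))).
  assert (Hhalf : exists a' b', a <= a' < b' /\ b' <= b /\ ~ (a' < r < b')).
  { destruct (Rle_lt_dec r ((a + b) / 2)).
    - exists ((a + b) / 2), b; repeat split; lra.
    - exists a, ((a + b) / 2); repeat split; lra. }
  destruct Hhalf as [a' [b' [Ha' [Hb' Hr]]]].
  destruct (Ulevel_dense l T Hl (S (fst (Cantor.of_nat i))) a' b' ltac:(lra))
    as [y [j [Hy [Hj HU]]]].
  exists y; split; [lra | split].
  - exact (Utail_interior_of_Ulevel l T _ j y Hj HU).
  - intros E; apply Hr; fold r in E; lra.
Qed.

(* Removing one rational in each [Ucover] leaves exactly the irrationals. *)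
Lemma Ulimsup_iff_Ucover l T x : Ulimsup l T x <-> forall i, Ucover l T i x.
Proof.
  split.
  - intros HU i.
    assert (Hx : irrational x).
    { destruct (HU 1%nat (le_n 1)) as [j [_ [n [_ [Hx _]]]]]; exact Hx. }
    split.
    + destruct (HU (S (fst (Cantor.of_nat i))) ltac:(lia)) as [j [Hj Hxj]].
      exact (Utail_interior_of_Ulevel l T _ j x Hj Hxj).
    + intros E; apply Hx; rewrite E; apply rational_rat_enum.
  - intros HG.
    assert (Hx : irrational x).
    { intros [p [q [_ E]]]; destruct (rat_enum_surjective p q) as [k Hk].
      destruct (HG (Cantor.to_nat (O, k))) as [_ Hne].
      rewrite Cantor.cancel_of_to in Hne; simpl in Hne; apply Hne; now rewrite Hk. }
    intros M HM; destruct (HG (Cantor.to_nat (M - 1, O)%nat)) as [[del [Hdel Hnear]] _].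
    rewrite Cantor.cancel_of_to in Hnear; simpl in Hnear.
    replace (S (M - 1)) with M in Hnear by lia.
    apply Hnear; [rewrite Rminus_diag, Rabs_R0; exact Hdel | exact Hx].
Qed.

Theorem Ulimsup_dense_G_delta l T :
  (forall M N, exists j, (M <= j)%nat /\ (N <= l j)%nat) ->
  dense (Ulimsup l T) /\ G_delta (Ulimsup l T).
Proof.
  intros Hl; split.
  - intros x eps Heps.
    destruct (baire_R (Ucover l T) (open_Ucover l T) (Ucover_dense l T Hl)
                (x - eps) (x + eps) ltac:(lra)) as [y [Hy HGy]].
    exists y; split; [now apply Ulimsup_iff_Ucover | apply Rabs_def1; lra].
  - exists (Ucover l T); split; [apply open_Ucover | apply Ulimsup_iff_Ucover].
Qed.

Lemma unbounded_of_increasing (l : nat -> nat) :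
  (forall k, (1 <= k)%nat -> (0 < l k)%nat) ->
  (forall k, (1 <= k)%nat -> (l k < l (S k))%nat) ->
  forall M N, exists j, (M <= j)%nat /\ (N <= l j)%nat.
Proof.
  intros Hpos Hincr M N.
  assert (Hid : forall k, (1 <= k)%nat -> (k <= l k)%nat).
  { induction k as [| k IH]; intros Hk; [lia |].
    destruct (Nat.eq_dec k 0) as [-> | Hk0]; [apply Hpos; lia |].
    specialize (IH ltac:(lia)); specialize (Hincr k ltac:(lia)); lia. }
  exists (Nat.max 1 (Nat.max M N)); split; [lia |].
  pose proof (Hid (Nat.max 1 (Nat.max M N)) ltac:(lia)); lia.
Qed.

Theorem theorem6p3 (beta : R) (f : R -> R) (l eta : nat -> nat) :
  irrational beta ->
  periodic1 f -> real_analytic f -> ~ trig_poly f ->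
  (forall k, (1 <= k)%nat -> (0 < l k)%nat) ->
  (forall k, (1 <= k)%nat -> (l k < l (S k))%nat) ->
  (forall k, (1 <= k)%nat -> fourier f (Z.of_nat (l k)) <> 0%C) ->
  (forall M : R, exists K : nat, forall k, (K <= k)%nat -> (1 <= k)%nat ->
      Cmod (fourier f (Z.of_nat (l k))) > M * Tsum f (l k)) ->
  (* eta k = least n >= 1 with q'_n > 2 k^2 / |a_{l_k}|^2 *)
  (forall k, (1 <= k)%nat ->
     (1 <= eta k)%nat /\
     IZR (cf_q beta (eta k)) > 2 * INR k ^ 2 / Cmod (fourier f (Z.of_nat (l k))) ^ 2 /\
     (forall n, (1 <= n)%nat -> IZR (cf_q beta n) > 2 * INR k ^ 2 / Cmod (fourier f (Z.of_nat (l k))) ^ 2 ->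
        (eta k <= n)%nat)) ->
  let V := fun (n m : nat) (alpha : R) =>
    irrational alpha /\ cf_q alpha n = Z.of_nat (l m) /\
    IZR (cf_q alpha (S n)) > 2 * IZR (cf_q beta (eta m)) * INR n ^ 2 in
  let Uj := fun (j : nat) (alpha : R) => exists n, (1 <= n)%nat /\ V n j alpha in
  let U := fun alpha : R => forall M, (1 <= M)%nat -> exists j, (M <= j)%nat /\ Uj j alpha in
  dense U /\ G_delta U.
Proof.
  intros _ _ _ _ Hpos Hincr _ _ _ V Uj U.
  exact (Ulimsup_dense_G_delta l (fun j n => 2 * IZR (cf_q beta (eta j)) * INR n ^ 2)
           (unbounded_of_increasing l Hpos Hincr)).
Qed.
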